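(* Every $\sigma$-compact topological gyrogroup $G$ admits an injective groupoid homomorphism, which is a homeomorphism onto its image, onto a closed subgyrogroup of a $\sigma$-compact, pathwise connected, locally pathwise connected topological gyrogroup.
   Context: A gyrogroup is a set $G$ with a binary operation $\oplus$ such that: (G1) there is a unique identity $0$ with $0\oplus a=a=a\oplus 0$; (G2) each $x$ has a unique inverse $\ominus x$ with $\ominus x\oplus x=0=x\oplus(\ominus x)$; (G3) for all $x,y$ there is an automorphism $\mathrm{gyr}[x,y]$ of $(G,\oplus)$ with $x\oplus(y\oplus z)=(x\oplus y)\oplus \mathrm{gyr}[x,y](z)$ for all $z$; (G4) $\mathrm{gyr}[x\oplus y,y]=\mathrm{gyr}[x,y]$. A topological gyrogroup is a gyrogroup with a topology (all spaces are assumed $T_1$) such that $\oplus$ is jointly continuous and $x\mapsto\ominus x$ is continuous. A subgyrogroup of $G$ is a nonempty $H\subseteq G$ that is a gyrogroup under the inherited operation and such that for all $a,b\in H$ the restriction of $\mathrm{gyr}[a,b]$ to $H$ is an automorphism of $H$. A groupoid homomorphism is a map $\varphi$ with $\varphi(x\oplus y)=\varphi(x)\oplus\varphi(y)$. A space is $\sigma$-compact if it is a countable union of compact subsets. *)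

From HB Require Import structures.
From mathcomp Require Import all_boot all_order all_algebra.
From mathcomp Require Import all_classical all_reals all_analysis.
From mathcomp Require Import Rstruct Rstruct_topology.
From Stdlib Require Import Rdefinitions.

Set Implicit Arguments.
Unset Strict Implicit.
Unset Printing Implicit Defensive.

Import Order.TTheory GRing.Theory Num.Theory.
Local Open Scope classical_set_scope.

Section Gyro.
Variable T : Type.
Variable op : T -> T -> T.
Variable gyr : T -> T -> T -> T.

(** With S = setT this is exactly axioms (G1)-(G4); for a general S it says
    that S is closed under op, is a gyrogroup under the inherited operation,
    and each gyr[a,b] (a,b in S) restricts to an automorphism of S. *)
Definition gyrogroup_on (S : set T) : Prop :=
  (forall a b, S a -> S b -> S (op a b)) /\
  exists2 e, S e &
  [/\
      ((forall a, S a -> op e a = a /\ op a e = a) /\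
       (forall e', S e' -> (forall a, S a -> op e' a = a /\ op a e' = a) -> e' = e)),
      (forall x, S x -> exists2 y, S y &
          [/\ op y x = e, op x y = e &
              forall y', S y' -> op y' x = e -> op x y' = e -> y' = y]),
      (forall x y, S x -> S y ->
          [/\ (forall z, S z -> S (gyr x y z)),
              (forall z w, S z -> S w -> gyr x y z = gyr x y w -> z = w),
              (forall w, S w -> exists2 z, S z & gyr x y z = w) &
              (forall z w, S z -> S w -> gyr x y (op z w) = op (gyr x y z) (gyr x y w))]),
      (forall x y z, S x -> S y -> S z -> op x (op y z) = op (op x y) (gyr x y z)) &
      (forall x y z, S x -> S y -> S z -> gyr (op x y) y z = gyr x y z)].

Definition gyrogroup : Prop := gyrogroup_on setT.

Definition subgyrogroup (S : set T) : Prop := S !=set0 /\ gyrogroup_on S.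

End Gyro.

(** Topological gyrogroup (T1 assumed, as in the paper). *)
Definition topological_gyrogroup (T : topologicalType)
    (op : T -> T -> T) (gyr : T -> T -> T -> T) : Prop :=
  [/\ gyrogroup op gyr,
      accessible_space T,
      continuous (fun p : T * T => op p.1 p.2) &
      exists e : T, exists inv : T -> T,
        [/\ (forall a, op e a = a /\ op a e = a),
            (forall x, op (inv x) x = e /\ op x (inv x) = e) &
            continuous inv]].

Definition sigma_compact (T : topologicalType) : Prop :=
  exists K : nat -> set T, (forall n, compact (K n)) /\ \bigcup_n K n = setT.

Definition path_connected_set (T : topologicalType) (A : set T) : Prop :=
  forall x y, A x -> A y ->
    exists f : R -> T, [/\ {within `[0%R, 1%R], continuous f},
                           f 0%R = x, f 1%R = y & f @` `[0%R, 1%R] `<=` A].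

Definition path_connected_space (T : topologicalType) : Prop :=
  path_connected_set (@setT T).

Definition locally_path_connected (T : topologicalType) : Prop :=
  forall (x : T) (U : set T), nbhs x U ->
    exists V : set T, [/\ open V, V x, V `<=` U & path_connected_set V].

Definition groupoid_hom (G H : Type) (opG : G -> G -> G) (opH : H -> H -> H)
    (phi : G -> H) : Prop :=
  forall x y, phi (opG x y) = opH (phi x) (phi y).

Definition embedding_onto_image (G H : topologicalType) (phi : G -> H) : Prop :=
  [/\ injective phi, continuous phi &
      forall U : set G, open U -> exists V : set H, open V /\ phi @` U = range phi `&` V].

From HB Require Import structures.
From mathcomp Require Import all_boot all_order all_algebra.
From mathcomp Require Import all_classical all_reals all_analysis.
From mathcomp Require Import Rstruct Rstruct_topology lra.

Set Implicit Arguments.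
Unset Strict Implicit.
Unset Printing Implicit Defensive.

Import Order.TTheory GRing.Theory Num.Theory.
Local Open Scope classical_set_scope.
Local Open Scope ring_scope.

(* The Hartman-Mycielski construction.  Let H be the right-continuous step
   functions [0,1) -> G with finitely many pieces, with the pointwise operations
   and the topology of convergence in measure: g is close to f when, for an
   assignment U of open neighbourhoods, the set of s with g s outside U (f s) has
   small Lebesgue measure.  The gyrogroup laws hold pointwise, and G sits in H as
   the constant functions; this copy is closed because a T1 topological gyrogroup
   is Hausdorff.  Moving breakpoints gives paths: [slide f m g] runs from f through
   m to g inside every basic neighbourhood of m containing f and g, so H is
   locally path connected.  A step function with n pieces depends continuously on
   its n values and n breakpoints, so if G is the union of the compacts K_i then
   H is the union of the continuous images of (K_0 u ... u K_n)^N x [0,1]^N. *)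

Local Notation R := Rdefinitions.R.

Definition in01 (s : R) : bool := (0 <= s) && (s < 1).
Definition Ico01 : set R := [set s | in01 s].

Lemma in01_of (s t : R) : 0 <= s -> s <= t -> t < 1 -> in01 s /\ in01 t.
Proof. by move=> s0 st t1; rewrite /in01; split; apply/andP; split; lra. Qed.

Lemma in01_0 : in01 0.
Proof. by rewrite /in01 lexx ltr01. Qed.

(* [lebesgue_measure] is a Caratheodory extension, hence an outer measure on
   every subset of R: no measurability side conditions arise below. *)
Definition len (A : set R) : R := fine (lebesgue_measure A).

Lemma lebesgue_le (A B : set R) :
  A `<=` B -> (lebesgue_measure A <= lebesgue_measure B)%E.
Proof.
move=> AB; rewrite /lebesgue_measure /lebesgue_stieltjes_measure /measure_extension.
exact: le_outer_measure.
Qed.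

Lemma lebesgue_Ico (a b : R) :
  a <= b -> lebesgue_measure [set s | a <= s /\ s < b] = (b - a)%:E.
Proof.
move=> ab; have -> : [set s | a <= s /\ s < b] = [set` `[a, b[%R].
  by apply/seteqP; split => s /=; rewrite in_itv /=; [move=> [-> ->]|move/andP].
rewrite lebesgue_measure_itv /= lte_fin.
case: ltP => [_|ba]; first by rewrite -EFinD.
have -> : b = a by apply/eqP; rewrite eq_le ab ba.
by rewrite subrr.
Qed.

Lemma lebesgue_len (A : set R) : A `<=` Ico01 -> lebesgue_measure A = (len A)%:E.
Proof.
move=> A01; rewrite fineK // ge0_fin_numE ?measure_ge0 //.
apply: le_lt_trans (lebesgue_le (B := [set s | 0 <= s /\ s < 1]) _) _.
  by move=> s /A01 /andP.
by rewrite lebesgue_Ico // subr0 ltry.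
Qed.

Lemma len_le (A B : set R) : B `<=` Ico01 -> A `<=` B -> len A <= len B.
Proof.
move=> B01 AB; have A01 : A `<=` Ico01 by move=> s /AB /B01.
by have := lebesgue_le AB; rewrite (lebesgue_len A01) (lebesgue_len B01) lee_fin.
Qed.

Lemma len_le_setU (A B C : set R) : B `<=` Ico01 -> C `<=` Ico01 ->
  A `<=` B `|` C -> len A <= len B + len C.
Proof.
move=> B01 C01 ABC; have BC01 : B `|` C `<=` Ico01 by move=> s [/B01|/C01].
apply: le_trans (len_le BC01 ABC) _.
have : (lebesgue_measure (B `|` C) <= lebesgue_measure B + lebesgue_measure C)%E.
  rewrite /lebesgue_measure /lebesgue_stieltjes_measure /measure_extension.
  exact: outer_measureU2.
by rewrite (lebesgue_len B01) (lebesgue_len C01) (lebesgue_len BC01) -EFinD lee_fin.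
Qed.

Lemma len_set0 : len set0 = 0.
Proof. by rewrite /len measure0. Qed.

Lemma len_le_Ico (A : set R) (u v : R) : A `<=` Ico01 ->
  A `<=` [set s | u <= s /\ s < v] -> u <= v -> len A <= v - u.
Proof.
by move=> A01 Auv uv; have := lebesgue_le Auv; rewrite lebesgue_Ico // (lebesgue_len A01).
Qed.

Lemma len_ge_Ico (A : set R) (u v : R) : A `<=` Ico01 ->
  [set s | u <= s /\ s < v] `<=` A -> u <= v -> v - u <= len A.
Proof.
by move=> A01 Auv uv; have := lebesgue_le Auv; rewrite lebesgue_Ico // (lebesgue_len A01).
Qed.

Lemma len_bigcup (D : nat -> set R) n w : (forall i, D i `<=` Ico01) ->
  (forall i, (i < n)%N -> len (D i) <= w) ->
  len [set s | exists2 i, (i < n)%N & D i s] <= n%:R * w.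
Proof.
move=> D01; elim: n => [_|n IH Dw].
  by rewrite (_ : [set s | _] = set0) ?len_set0 ?mul0r //; apply/seteqP; split => s // [].
have Dn01 : [set s | exists2 i, (i < n)%N & D i s] `<=` Ico01 by move=> s [i _ /D01].
apply: le_trans (len_le_setU Dn01 (D01 n) _) _.
  by move=> s [i]; rewrite ltnS leq_eqVlt => /orP[/eqP->|iln] Dis; [right|left; exists i].
have := IH (fun i ilt => Dw i (ltnW ilt)); have := Dw n (ltnSn n).
by rewrite -natr1 mulrDl mul1r; lra.
Qed.

Definition threshold_gap (u v : R) : set R := [set s | in01 s /\ (s < u) != (s < v)].

Lemma len_threshold_gap (u v w : R) :
  u - v <= w -> v - u <= w -> len (threshold_gap u v) <= w.
Proof.
move=> uvw vuw; have gap01 : threshold_gap u v `<=` Ico01 by move=> s [].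
case: (lerP u v) => uv.
  apply: le_trans (len_le_Ico gap01 _ uv) _; last lra.
  by move=> s [_]; case: (ltP s u); case: (ltP s v) => //= ? ? _; lra.
apply: le_trans (len_le_Ico gap01 _ (ltW uv)) _; last lra.
by move=> s [_]; case: (ltP s u); case: (ltP s v) => //= ? ? _; lra.
Qed.

Section StepFunctions.
Context (G : eqType) (e : G).

Definition restrict01 (F : R -> G) : R -> G := fun s => if in01 s then F s else e.

Lemma restrict01_in (F : R -> G) s : in01 s -> restrict01 F s = F s.
Proof. by rewrite /restrict01 => ->. Qed.

Lemma restrict01_out (F : R -> G) s : ~~ in01 s -> restrict01 F s = e.
Proof. by rewrite /restrict01 => /negbTE ->. Qed.

Definition breakfree (B : seq R) (s t : R) : bool :=
  all (fun b => ~~ ((s < b) && (b <= t))) B.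

(* Right-continuous step functions on [0,1) with breakpoints among [B]; the fixed
   value [e] off [0,1) makes two of them equal once they agree on [0,1). *)
Definition is_step (f : R -> G) : Prop :=
  (forall s, ~~ in01 s -> f s = e) /\
  exists B : seq R, forall s t, 0 <= s -> s <= t -> t < 1 -> breakfree B s t -> f s = f t.

Lemma is_step_map3 (F : G -> G -> G -> G) f g h :
  is_step f -> is_step g -> is_step h ->
  is_step (restrict01 (fun s => F (f s) (g s) (h s))).
Proof.
move=> [_ [Bf Hf]] [_ [Bg Hg]] [_ [Bh Hh]]; split=> [s|]; first exact: restrict01_out.
exists (Bf ++ Bg ++ Bh) => s t s0 st t1; rewrite /breakfree !all_cat => /and3P[nf ng nh].
have [Is It] := in01_of s0 st t1.
by rewrite !restrict01_in // (Hf s t) ?(Hg s t) ?(Hh s t).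
Qed.

Lemma is_step_splice (a b : R) f g h : is_step f -> is_step g -> is_step h ->
  is_step (restrict01 (fun s => if s < a then f s else if s < b then g s else h s)).
Proof.
move=> [_ [Bf Hf]] [_ [Bg Hg]] [_ [Bh Hh]]; split=> [s|]; first exact: restrict01_out.
exists [:: a, b & Bf ++ Bg ++ Bh] => s t s0 st t1.
rewrite /breakfree /= !all_cat => /and5P[na nb nf ng nh].
have [Is It] := in01_of s0 st t1; rewrite !restrict01_in //.
have -> : (s < a) = (t < a) by move: na; case: (ltP s a); case: (ltP t a) => //= ? ?; lra.
have -> : (s < b) = (t < b) by move: nb; case: (ltP s b); case: (ltP t b) => //= ? ?; lra.
by rewrite (Hf s t) ?(Hg s t) ?(Hh s t).
Qed.

Lemma is_step_const x : is_step (restrict01 (fun _ => x)).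
Proof.
split=> [s|]; first exact: restrict01_out.
by exists [::] => s t s0 st t1 _; have [Is It] := in01_of s0 st t1; rewrite !restrict01_in.
Qed.

Lemma breakfree_right (B : seq R) s : s < 1 -> exists d, [/\ 0 < d, s + d <= 1 &
  forall t, s <= t -> t < s + d -> breakfree B s t].
Proof.
move=> s1; elim: B => [|b B [d [d0 sd nB]]]; first by exists (1 - s); split => //; lra.
have [sb|bs] := ltP s b; last first.
  by exists d; split => // t st td; rewrite /= nB // andbC; apply/nandP; left; rewrite -leNgt.
have md : Num.min d (b - s) <= d by rewrite ge_min lexx.
have mb : Num.min d (b - s) <= b - s by rewrite ge_min lexx orbT.
exists (Num.min d (b - s)); split; [by rewrite lt_min d0 /=; lra|lra|].
move=> t st td; rewrite /= nB ?andbT //; last lra.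
by apply/nandP; right; rewrite -ltNge; lra.
Qed.

Lemma breakfree_left (B : seq R) s : 0 <= s -> exists c, [/\ 0 <= c, c <= s,
  c \in 0 :: B & breakfree B c s].
Proof.
move=> s0; elim: B => [|b B [c [c0 cs cB nB]]]; first by exists 0; rewrite inE eqxx.
have [/andP[cb bs]|ncb] := boolP ((c < b) && (b <= s)).
  exists b; split => //; [lra|by rewrite !inE eqxx orbT|].
  rewrite /= ltxx /=; apply/allP => d dB; have := allP nB d dB.
  by apply: contra => /andP[bd ds]; apply/andP; split => //; lra.
exists c; split => //; last by rewrite /= ncb.
by move: cB; rewrite !inE => /orP[->|->]; rewrite ?orbT.
Qed.

Section OneStep.
Context (f : R -> G).
Hypothesis f_step : is_step f.

Lemma is_step_right_const s : in01 s -> exists d, [/\ 0 < d, s + d <= 1 &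
  forall t, s <= t -> t < s + d -> f t = f s].
Proof.
have [_ [B HB]] := f_step; move=> /andP[s0 s1].
have [d [d0 sd nB]] := breakfree_right B s1.
exists d; split => // t st td.
by rewrite (HB s t) //; [lra|exact: nB].
Qed.

Lemma is_step_finite_range : exists l : seq G, forall s, in01 s -> f s \in l.
Proof.
have [_ [B HB]] := f_step; exists (map f (0 :: B)) => s /andP[s0 s1].
have [c [c0 cs cB nB]] := breakfree_left B s0.
by rewrite -(HB c s) //; exact: map_f.
Qed.

Lemma is_step_sorted_breaks : exists B : seq R, [/\ sorted <=%R B, 0 \in B,
  all in01 B & forall s t, 0 <= s -> s <= t -> t < 1 -> breakfree B s t -> f s = f t].
Proof.
have [_ [B HB]] := f_step; exists (sort <=%R (0 :: [seq b <- B | in01 b])); split.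
- by apply: sort_sorted; exact: le_total.
- by rewrite mem_sort inE eqxx.
- apply/allP => b; rewrite mem_sort inE => /orP[/eqP ->|]; first exact: in01_0.
  by rewrite mem_filter => /andP[].
move=> s t s0 st t1 nB; apply: HB => //; apply/allP => b bB; apply/negP => /andP[sb bt].
have bB' : b \in sort <=%R (0 :: [seq b <- B | in01 b]).
  by rewrite mem_sort inE mem_filter bB andbT /in01; apply/orP; right; apply/andP; split; lra.
by have := allP nB b bB'; rewrite sb bt.
Qed.

End OneStep.

Lemma len_level2_gt0 (f g : R -> G) s : is_step f -> is_step g -> in01 s ->
  0 < len [set t | in01 t /\ f t = f s /\ g t = g s].
Proof.
move=> fs gs Is; have [d1 [d10 sd1 fd1]] := is_step_right_const fs Is.
have [d2 [d20 sd2 gd2]] := is_step_right_const gs Is.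
have m1 : Num.min d1 d2 <= d1 by rewrite ge_min lexx.
have m2 : Num.min d1 d2 <= d2 by rewrite ge_min lexx orbT.
have m0 : 0 < Num.min d1 d2 by rewrite lt_min d10.
apply: (lt_le_trans m0).
have -> : Num.min d1 d2 = s + Num.min d1 d2 - s by rewrite addrC addKr.
apply: len_ge_Ico; [by move=> t []| |lra].
move=> t [st td]; case/andP: Is => s0 s1; rewrite /in01; split; first by apply/andP; lra.
by split; [apply: fd1|apply: gd2]; lra.
Qed.

Lemma len_level_gt0 (f : R -> G) s : is_step f -> in01 s ->
  0 < len [set t | in01 t /\ f t = f s].
Proof.
move=> fs Is; apply: lt_le_trans (len_level2_gt0 fs fs Is) _.
by apply: len_le => [t []//|t [It [ft _]]].
Qed.

End StepFunctions.

Definition step_space (G : topologicalType) (e : G) := {f : R -> G | is_step e f}.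
Arguments step_space : clear implicits.
HB.instance Definition _ G e := gen_eqMixin (step_space G e).
HB.instance Definition _ G e := gen_choiceMixin (step_space G e).

Lemma open_seq_bigcap (T : topologicalType) (I : eqType) (V : I -> set T) (l : seq I) :
  (forall i, open (V i)) -> open [set z | forall i, i \in l -> V i z].
Proof.
move=> oV; elim: l => [|i l IH].
  suff -> : [set z | forall j, j \in [::] -> V j z] = setT by exact: openT.
  by apply/seteqP; split.
suff -> : [set z | forall j, j \in i :: l -> V j z] =
          V i `&` [set z | forall j, j \in l -> V j z] by exact: openI.
apply/seteqP; split => z /=.
  by move=> Vz; split => [|j jl]; apply: Vz; rewrite inE ?eqxx ?jl ?orbT.
by move=> [Viz Vz] j; rewrite inE => /orP[/eqP ->|/Vz].
Qed.

Section Disagreement.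
Context (G : topologicalType).
Implicit Types (U : G -> set G).

Definition nbhs_family U := forall x, open_nbhs x (U x).

Lemma nbhs_familyT : nbhs_family (fun _ => setT).
Proof. by move=> x; exact: open_nbhsT. Qed.

Lemma nbhs_familyI U V : nbhs_family U -> nbhs_family V ->
  nbhs_family (fun x => U x `&` V x).
Proof. by move=> nU nV x; exact: open_nbhsI. Qed.

Definition nbhs_over (A V : set G) : G -> set G :=
  fun z => if `[< A z >] then V else setT.

Lemma nbhs_over_family (A V : set G) : open V -> A `<=` V -> nbhs_family (nbhs_over A V).
Proof.
move=> oV AV z; rewrite /nbhs_over.
by case: asboolP => [/AV Vz|_]; [split|exact: open_nbhsT].
Qed.

Lemma nbhs_over_in (A V : set G) z : A z -> nbhs_over A V z = V.
Proof. by rewrite /nbhs_over => /asboolP ->. Qed.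

Definition disagree (f g : R -> G) U : set R := [set s | in01 s /\ ~ U (f s) (g s)].

Lemma disagree01 (f g : R -> G) U : disagree f g U `<=` Ico01.
Proof. by move=> s []. Qed.

Lemma disagree_self (f : R -> G) U : nbhs_family U -> disagree f f U = set0.
Proof. by move=> nU; apply/seteqP; split => s // [_]; case: (nU (f s)). Qed.

Lemma len_disagree_le (f g f' g' : R -> G) U U' :
  (forall s, in01 s -> U (f s) (g s) -> U' (f' s) (g' s)) ->
  len (disagree f' g' U') <= len (disagree f g U).
Proof.
move=> UU'; apply: len_le; first exact: disagree01.
by move=> s [Is nU']; split => // /(UU' s Is).
Qed.

End Disagreement.

Section MeasureTopology.
Context (G : topologicalType) (e : G).
Local Notation H := (step_space G e).
Implicit Types (f g : H) (U : G -> set G).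

Definition mball f U (eps : R) : set H :=
  [set g | len (disagree (sval f) (sval g) U) < eps].

Definition mopen (A : set H) : Prop :=
  forall f, A f -> exists U eps, [/\ nbhs_family U, 0 < eps & mball f U eps `<=` A].

Lemma mballE f U eps g : mball f U eps g = (len (disagree (sval f) (sval g) U) < eps).
Proof. by []. Qed.

Lemma mball_sub f U U' eps eps' : (forall x y, U x y -> U' x y) -> eps <= eps' ->
  mball f U eps `<=` mball f U' eps'.
Proof.
move=> UU' le g; rewrite mballE => fg; apply: le_lt_trans (lt_le_trans fg le).
by apply: len_disagree_le => s _ /UU'.
Qed.

Lemma mopenT : mopen setT.
Proof. by move=> f _; exists (fun _ => setT), 1; split => //; exact: nbhs_familyT. Qed.

Lemma mopenI : setI_closed mopen.
Proof.
move=> A B oA oB f [Af Bf].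
have [U1 [e1 [n1 p1 s1]]] := oA f Af; have [U2 [e2 [n2 p2 s2]]] := oB f Bf.
exists (fun x => U1 x `&` U2 x), (Num.min e1 e2); split.
- exact: nbhs_familyI.
- by rewrite lt_min p1 p2.
- move=> g Hg; split; [apply: s1|apply: s2]; apply: mball_sub Hg.
  + by move=> x y [].
  + by rewrite ge_min lexx.
  + by move=> x y [].
  + by rewrite ge_min lexx orbT.
Qed.

Lemma mopen_bigcup (I : Type) (F : I -> set H) : (forall i, mopen (F i)) ->
  mopen (\bigcup_i F i).
Proof.
move=> oF f [i _ Fi]; have [U [eps [nU pe sN]]] := oF i f Fi.
by exists U, eps; split => // g /sN Fg; exists i.
Qed.

End MeasureTopology.

HB.instance Definition _ G e := isOpenTopological.Build (step_space G e)
  (@mopenT G e) (@mopenI G e) (@mopen_bigcup G e).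

Section StepSpace.
Context (G : topologicalType) (e : G).
Local Notation H := (step_space G e).
Implicit Types (f g : H) (U : G -> set G).

Lemma step_openE (A : set H) : open A = mopen A.
Proof. by []. Qed.

Lemma step_ext f g : (forall s, in01 s -> sval f s = sval g s) -> f = g.
Proof.
move: f g => [f fstep] [g gstep] /= fg.
have {}fg : f = g.
  apply: funext => s; case: (boolP (in01 s)) => [/fg //|Is].
  by rewrite (proj1 fstep s Is) (proj1 gstep s Is).
by subst g; congr exist; exact: Prop_irrelevance.
Qed.

Lemma mball_self f U eps : nbhs_family U -> 0 < eps -> mball f U eps f.
Proof. by move=> nU ep; rewrite mballE disagree_self // len_set0. Qed.

Lemma mball_open f U eps : nbhs_family U -> open (mball f U eps).
Proof.
move=> nU; rewrite step_openE => g fg; have [l Hl] := is_step_finite_range (svalP f).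
(* [W y] refines [U x] around [y], for the finitely many values [x] of [f] *)
pose W y := [set z | forall x, x \in [seq x <- l | `[< U x y >]] -> U x z].
exists W, (eps - len (disagree (sval f) (sval g) U)); split.
- move=> y; split; first by apply: open_seq_bigcap => x; case: (nU x).
  by move=> x; rewrite mem_filter => /andP[/asboolP].
- by rewrite subr_gt0.
- move=> h gh; rewrite mballE.
  suff : len (disagree (sval f) (sval h) U) <=
         len (disagree (sval f) (sval g) U) + len (disagree (sval g) (sval h) W).
    by move: gh; rewrite mballE; lra.
  apply: len_le_setU; [exact: disagree01|exact: disagree01|].
  move=> s [Is nUfh]; have [Ufg|] := pselect (U (sval f s) (sval g s)); last by left.
  by right; split => // Wgh; apply/nUfh/Wgh; rewrite mem_filter Hl // andbT; apply/asboolP.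
Qed.

Lemma nbhs_mball f U eps : nbhs_family U -> 0 < eps -> nbhs f (mball f U eps).
Proof. by move=> nU ep; apply: open_nbhs_nbhs; split; [exact: mball_open|exact: mball_self]. Qed.

Lemma nbhs_mballP f (A : set H) : nbhs f A ->
  exists U eps, [/\ nbhs_family U, 0 < eps & mball f U eps `<=` A].
Proof.
rewrite nbhsE => -[B [+ Bf] BA]; rewrite step_openE => /(_ f Bf) [U [eps [nU ep sN]]].
by exists U, eps; split => // h /sN /BA.
Qed.

Definition lift3 (F : G -> G -> G -> G) f g h : H :=
  exist _ _ (is_step_map3 F (svalP f) (svalP g) (svalP h)).

Lemma lift3E F f g h s : in01 s ->
  sval (lift3 F f g h) s = F (sval f s) (sval g s) (sval h s).
Proof. exact: restrict01_in. Qed.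

Definition const_step (x : G) : H := exist _ _ (is_step_const e x).

Lemma const_stepE x s : in01 s -> sval (const_step x) s = x.
Proof. exact: restrict01_in. Qed.

Lemma const_step_inj : injective const_step.
Proof. by move=> x y /(congr1 (fun f : H => sval f 0)); rewrite !const_stepE ?in01_0. Qed.

End StepSpace.

Section StepSpaceSeparation.
Context (G : topologicalType) (e : G).
Local Notation H := (step_space G e).
Local Notation cst := (@const_step G e).

Lemma step_accessible : accessible_space G -> accessible_space H.
Proof.
move=> T1 f g fg.
have [s [Is fgs]] : exists s, in01 s /\ sval f s != sval g s.
  apply: contrapT => fg_eq; move/eqP: fg; apply; apply: step_ext => s Is.
  by apply: contrapT => ne; apply: fg_eq; exists s; split => //; apply/eqP.
have [V [oV Vf Vg]] := T1 _ _ fgs.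
pose U := nbhs_over [set sval f s] V.
pose L := [set t | in01 t /\ sval f t = sval f s /\ sval g t = sval g s].
have nU : nbhs_family U by apply: nbhs_over_family => // _ ->; rewrite -inE.
exists (mball f U (len L)); split; first exact: mball_open.
  by rewrite inE; apply: mball_self => //; apply: len_level2_gt0 => //; exact: svalP.
rewrite inE /= mballE; apply/negP; rewrite -leNgt; apply: len_le; first exact: disagree01.
move=> t [It [ft gt]]; split => //; rewrite ft gt /U nbhs_over_in //.
by move: Vg; rewrite inE.
Qed.

Lemma const_step_continuous : continuous cst.
Proof.
move=> x A /nbhs_mballP [U [eps [nU ep sN]]].
apply: filterS (open_nbhs_nbhs (nU x)) => z Uz; apply: sN.
rewrite mballE (_ : disagree _ _ U = set0) ?len_set0 //.
by apply/seteqP; split => s // [Is]; rewrite !const_stepE.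
Qed.

Lemma const_step_open (O : set G) : open O ->
  exists V : set H, open V /\ cst @` O = range cst `&` V.
Proof.
move=> oO; pose outside (h : H) := [set s | in01 s /\ ~ O (sval h s)].
have outside01 h : outside h `<=` Ico01 by move=> s [].
have outside_cst x : outside (cst x) = if `[< O x >] then set0 else Ico01.
  apply/seteqP; case: asboolP => Ox; split => s //; first by move=> [Is]; rewrite const_stepE.
  - by move=> [].
  - by move=> Is; split; rewrite ?const_stepE.
exists [set h | len (outside h) < 1]; split.
  rewrite step_openE => h hV; exists (nbhs_over O O), (1 - len (outside h)); split.
  - exact: nbhs_over_family.
  - by rewrite subr_gt0.
  - move=> k hk; suff : len (outside k) <= len (outside h) +
                         len (disagree (sval h) (sval k) (nbhs_over O O)).
      by move: hk; rewrite mballE /=; lra.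
    apply: len_le_setU; [exact: outside01|exact: disagree01|].
    move=> s [Is nOk]; have [Oh|] := pselect (O (sval h s)); last by left.
    by right; split => //; rewrite nbhs_over_in.
have len_Ico01 : len Ico01 = 1.
  rewrite (_ : Ico01 = [set s | 0 <= s /\ s < 1]); last by apply/seteqP; split => s /andP.
  by rewrite /len lebesgue_Ico ?ler01 // subr0.
apply/seteqP; split => [_ [x Ox <-]|_ [[x _ <-]] /=].
  by split; [exists x|rewrite /= outside_cst; case: asboolP => // _; rewrite len_set0 ltr01].
rewrite outside_cst; case: asboolP => [Ox _|_]; first by exists x.
by rewrite len_Ico01 ltxx.
Qed.

Lemma const_step_closed : hausdorff_space G -> closed (range cst).
Proof.
move=> hG; rewrite -[range _]setCK; apply: open_closedC; rewrite step_openE => h nh.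
have [s1 [s2 [I1 I2 h12]]] : exists s1 s2, [/\ in01 s1, in01 s2 & sval h s1 != sval h s2].
  apply: contrapT => hconst; apply: nh; exists (sval h 0) => //.
  apply: step_ext => s Is; rewrite const_stepE //; apply: contrapT => ne; apply: hconst.
  by exists 0, s; split => //; [exact: in01_0|apply/eqP].
move: hG; rewrite open_hausdorff => /(_ _ _ h12) [[V1 V2] /= [V1h V2h] [oV1 oV2 /eqP V12]].
pose U z := nbhs_over [set sval h s1] V1 z `&` nbhs_over [set sval h s2] V2 z.
pose L s := [set t | in01 t /\ sval h t = sval h s].
have hstep : is_step e (sval h) by exact: svalP.
exists U, (Num.min (len (L s1)) (len (L s2))); split.
- by apply: nbhs_familyI; apply: nbhs_over_family => // _ ->; rewrite -inE.
- by rewrite lt_min !(len_level_gt0 hstep).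
- move=> k + [c _ ck]; rewrite -ck mballE lt_min => /andP[k1 k2].
  have far s : ~ U (sval h s) c -> len (L s) <= len (disagree (sval h) (sval (cst c)) U).
    move=> nU; apply: len_le; first exact: disagree01.
    by move=> t [It ht]; split => //; rewrite ht const_stepE.
  have [V1c|nV1c] := pselect (V1 c); last first.
    suff: len (L s1) <= len (disagree (sval h) (sval (cst c)) U) by lra.
    by apply: far => -[]; rewrite nbhs_over_in.
  suff: len (L s2) <= len (disagree (sval h) (sval (cst c)) U) by lra.
  apply: far => -[_]; rewrite nbhs_over_in // => V2c.
  by have : (V1 `&` V2) c by []; rewrite V12.
Qed.

End StepSpaceSeparation.

Definition slide_lo (t : R) : R := Num.max 0 (2 * t - 1).
Definition slide_hi (t : R) : R := Num.min 1 (2 * t).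

Lemma slide_lo_small t : t <= 1/2 -> slide_lo t = 0.
Proof. by move=> t2; rewrite /slide_lo max_l //; lra. Qed.

Lemma slide_lo_large t : 1/2 <= t -> slide_lo t = 2 * t - 1.
Proof. by move=> t2; rewrite /slide_lo max_r //; lra. Qed.

Lemma slide_hi_small t : t <= 1/2 -> slide_hi t = 2 * t.
Proof. by move=> t2; rewrite /slide_hi min_r //; lra. Qed.

Lemma slide_hi_large t : 1/2 <= t -> slide_hi t = 1.
Proof. by move=> t2; rewrite /slide_hi min_l //; lra. Qed.

Lemma slide_lo_lipschitz t t0 d : t - t0 <= d -> t0 - t <= d ->
  slide_lo t - slide_lo t0 <= 2 * d /\ slide_lo t0 - slide_lo t <= 2 * d.
Proof.
move=> tt0 t0t; case: (lerP t (1/2)) => t2; case: (lerP t0 (1/2)) => t02;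
  rewrite ?(slide_lo_small t2) ?(slide_lo_small t02) ?(slide_lo_large (ltW t2))
          ?(slide_lo_large (ltW t02)); split; lra.
Qed.

Lemma slide_hi_lipschitz t t0 d : t - t0 <= d -> t0 - t <= d ->
  slide_hi t - slide_hi t0 <= 2 * d /\ slide_hi t0 - slide_hi t <= 2 * d.
Proof.
move=> tt0 t0t; case: (lerP t (1/2)) => t2; case: (lerP t0 (1/2)) => t02;
  rewrite ?(slide_hi_small t2) ?(slide_hi_small t02) ?(slide_hi_large (ltW t2))
          ?(slide_hi_large (ltW t02)); split; lra.
Qed.

Section Slide.
Context (G : topologicalType) (e : G).
Local Notation H := (step_space G e).
Implicit Types (f m g : H).

(* As [t] runs from 0 to 1, first [m] invades [f] from the left (reaching all
   of [0,1) at [t = 1/2]), then [g] invades [m]. *)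
Definition slide f m g (t : R) : H :=
  exist _ _ (is_step_splice (slide_lo t) (slide_hi t) (svalP g) (svalP m) (svalP f)).

Lemma slideE f m g t s : in01 s -> sval (slide f m g t) s =
  if s < slide_lo t then sval g s else if s < slide_hi t then sval m s else sval f s.
Proof. exact: restrict01_in. Qed.

Lemma slide0 f m g : slide f m g 0 = f.
Proof.
apply: step_ext => s Is; rewrite slideE //.
have -> : slide_lo 0 = 0 by apply: slide_lo_small; lra.
have -> : slide_hi 0 = 0 by rewrite slide_hi_small ?mulr0 //; lra.
by rewrite ltNge; case/andP: Is => ->.
Qed.

Lemma slide1 f m g : slide f m g 1 = g.
Proof.
apply: step_ext => s Is; rewrite slideE //.
have -> : slide_lo 1 = 1 by rewrite slide_lo_large ?mulr1 //; lra.
by case/andP: Is => _ ->.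
Qed.

Lemma slide_continuous f m g : continuous (slide f m g).
Proof.
move=> t0 A /nbhs_mballP [U [eps [nU ep sN]]].
apply: filterS (nbhsx_ballx t0 (eps / 5) _); last by lra.
move=> t; rewrite /ball /= ltr_norml => /andP[tt0 t0t]; apply: sN; rewrite mballE.
have [lo1 lo2] := @slide_lo_lipschitz t t0 (eps / 5) ltac:(lra) ltac:(lra).
have [hi1 hi2] := @slide_hi_lipschitz t t0 (eps / 5) ltac:(lra) ltac:(lra).
have gap_lo := @len_threshold_gap (slide_lo t0) (slide_lo t) (2 * (eps / 5)) ltac:(lra) ltac:(lra).
have gap_hi := @len_threshold_gap (slide_hi t0) (slide_hi t) (2 * (eps / 5)) ltac:(lra) ltac:(lra).
suff : len (disagree (sval (slide f m g t0)) (sval (slide f m g t)) U) <=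
       len (threshold_gap (slide_lo t0) (slide_lo t)) +
       len (threshold_gap (slide_hi t0) (slide_hi t)) by lra.
apply: len_le_setU; [by move=> s []|by move=> s []|move=> s [Is nU']].
rewrite !slideE // in nU'.
have [lo_ne|lo_eq] := boolP ((s < slide_lo t0) != (s < slide_lo t)); first by left.
have [hi_ne|hi_eq] := boolP ((s < slide_hi t0) != (s < slide_hi t)); first by right.
exfalso; apply: nU'; move: lo_eq hi_eq; rewrite !negbK => /eqP-> /eqP->.
by case: (nU (if s < slide_lo t then sval g s else
               if s < slide_hi t then sval m s else sval f s)).
Qed.

Lemma slide_mball f m g U eps t : nbhs_family U ->
  mball m U eps f -> mball m U eps g -> mball m U eps (slide f m g t).
Proof.
move=> nU; rewrite !mballE => mf mg.
have Um x : U x x by case: (nU x).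
case: (lerP t (1/2)) => t2; [apply: le_lt_trans mf|apply: le_lt_trans mg];
  apply: len_disagree_le => s Is; rewrite slideE //.
- rewrite slide_lo_small // ltNge; case/andP: Is => -> _ /=.
  by case: ifP => // _ _; exact: Um.
- rewrite slide_hi_large ?(ltW t2) //; case/andP: Is => _ -> /=.
  by case: ifP => // _ _; exact: Um.
Qed.

Lemma slide_path f m g : [/\ {within `[0%R, 1%R], continuous (slide f m g)},
  slide f m g 0 = f & slide f m g 1 = g].
Proof. by split; [apply: continuous_subspaceT; exact: slide_continuous|exact: slide0|exact: slide1]. Qed.

Lemma step_path_connected : path_connected_space H.
Proof. by move=> f g _ _; exists (slide f f g); have [] := slide_path f f g. Qed.

Lemma step_locally_path_connected : locally_path_connected H.
Proof.
move=> m A /nbhs_mballP [U [eps [nU ep sN]]].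
exists (mball m U eps); split => //; [exact: mball_open|exact: mball_self|].
move=> f g mf mg; exists (slide f m g); have [? ? ?] := slide_path f m g; split => //.
by move=> _ [t _ <-]; exact: slide_mball.
Qed.

End Slide.

Section LiftContinuity.
Context (G : topologicalType) (e : G).
Local Notation H := (step_space G e).

Lemma lift_unary_continuous (F : G -> G) : continuous F ->
  continuous (fun f : H => lift3 (fun a _ _ => F a) f f f).
Proof.
move=> Fc f A /nbhs_mballP [U [eps [nU ep sN]]].
pose V x := F @^-1` U (F x).
have nV : nbhs_family V.
  move=> x; split; last by case: (nU (F x)).
  by apply: open_comp => [z _|]; [exact: Fc|case: (nU (F x))].
apply: filterS (nbhs_mball f nV ep) => f' ff'; apply: sN; rewrite mballE.
by apply: le_lt_trans ff'; apply: len_disagree_le => s Is; rewrite !lift3E.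
Qed.

Lemma lift_binary_continuous (F : G -> G -> G) :
  continuous (fun p : G * G => F p.1 p.2) ->
  continuous (fun p : H * H => lift3 (fun a b _ => F a b) p.1 p.2 p.1).
Proof.
move=> Fc [f g] A /nbhs_mballP [U [eps [nU ep sN]]].
have box (p : G * G) : exists PQ : set G * set G, [/\ open_nbhs p.1 PQ.1,
    open_nbhs p.2 PQ.2 & forall a b, PQ.1 a -> PQ.2 b -> U (F p.1 p.2) (F a b)].
  have /Fc[[P Q] /= [Pp Qp] PQ] := open_nbhs_nbhs (nU (F p.1 p.2)).
  move: Pp Qp; rewrite !nbhsE => -[P' P'p P'P] [Q' Q'p Q'Q].
  by exists (P', Q'); split => // a b /P'P Pa /Q'Q Qb; exact: (PQ (a, b)).
have [PQ HPQ] := choice box.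
have [lf Hlf] := is_step_finite_range (svalP f).
have [lg Hlg] := is_step_finite_range (svalP g).
(* refine the boxes around the finitely many value pairs of [f] and [g] *)
pose U1 x := [set z | forall y, y \in lg -> (PQ (x, y)).1 z].
pose U2 y := [set z | forall x, x \in lf -> (PQ (x, y)).2 z].
have nU1 : nbhs_family U1.
  move=> x; split=> [|y _]; last by case: (HPQ (x, y)) => -[].
  by apply: open_seq_bigcap => y; case: (HPQ (x, y)) => -[].
have nU2 : nbhs_family U2.
  move=> y; split=> [|x _]; last by case: (HPQ (x, y)) => _ [].
  by apply: open_seq_bigcap => x; case: (HPQ (x, y)) => _ [].
have e2 : 0 < eps / 2 by lra.
exists (mball f U1 (eps / 2), mball g U2 (eps / 2)).
  by split; exact: nbhs_mball.
move=> [f' g'] /= [ff' gg']; apply: sN; rewrite mballE; rewrite !mballE in ff' gg'.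
suff : len (disagree (sval (lift3 (fun a b _ => F a b) f g f))
                     (sval (lift3 (fun a b _ => F a b) f' g' f')) U) <=
       len (disagree (sval f) (sval f') U1) + len (disagree (sval g) (sval g') U2) by lra.
apply: len_le_setU; [exact: disagree01|exact: disagree01|].
move=> s [Is nU']; rewrite !lift3E // in nU'.
have [u1|] := pselect (U1 (sval f s) (sval f' s)); last by left.
have [u2|] := pselect (U2 (sval g s) (sval g' s)); last by right.
by exfalso; apply: nU'; case: (HPQ (sval f s, sval g s)) => _ _; apply;
  [apply: u1; exact: Hlg|apply: u2; exact: Hlf].
Qed.

End LiftContinuity.

Lemma nbhs_prod_coords (T : topologicalType) (c : prod_topology (fun _ : nat => T))
    (P : nat -> set T) (n : nat) : (forall i, nbhs (c i) (P i)) ->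
  nbhs c [set c' : prod_topology (fun _ : nat => T) | forall i, (i < n)%N -> P i (c' i)].
Proof.
move=> cP; elim: n => [|n IH]; first by apply: filterS filterT => c' _ i.
have cPn : nbhs c [set c' : prod_topology (fun _ : nat => T) | P n (c' n)].
  exact: (@proj_continuous nat (fun _ => T) n c _ (cP n)).
apply: filterS (filterI IH cPn) => c' [c'P c'Pn] i; rewrite ltnS leq_eqVlt.
by case/orP => [/eqP ->|/c'P].
Qed.

Section Layers.
Context (G : topologicalType) (e : G).
Local Notation H := (step_space G e).
Local Notation seqT T := (prod_topology (fun _ : nat => T)).
Implicit Types (c : nat -> G) (r : nat -> R).

Fixpoint layer (n : nat) c r (s : R) : G :=
  if n is k.+1 then (if r k <= s then c k else layer k c r s) else e.

Lemma layer_rel (Rel : G -> G -> Prop) n c r c' r' s t : Rel e e ->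
  (forall i, (i < n)%N -> (r i <= s) = (r' i <= t)) ->
  (forall i, (i < n)%N -> Rel (c i) (c' i)) -> Rel (layer n c r s) (layer n c' r' t).
Proof.
move=> Ree; elim: n => [|n IH] rr' cc' //=.
rewrite rr' //; case: ifP => _; first exact: cc'.
by apply: IH => i ilt; [apply: rr'|apply: cc']; rewrite ltnS ltnW.
Qed.

Lemma layer_last n c r s : (exists2 i, (i < n)%N & r i <= s) ->
  exists j, [/\ (j < n)%N, r j <= s, layer n c r s = c j &
                forall i, (j < i < n)%N -> s < r i].
Proof.
elim: n => [|n IH] [i ilt ris] /=; first by [].
case: (leP (r n) s) => rn.
  by exists n; split => // k /andP[nk kn]; move: (leq_trans nk kn); rewrite ltnn.
have [|j [jn rjs lj jm]] := IH.
  exists i => //; move: ilt; rewrite ltnS leq_eqVlt => /orP[/eqP ein|//].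
  by move: ris; rewrite ein leNgt rn.
exists j; split => //; first exact: ltnW.
move=> k /andP[jk]; rewrite ltnS leq_eqVlt => /orP[/eqP -> //|kn].
by apply: jm; rewrite jk.
Qed.

Lemma is_step_layer n c r : is_step e (restrict01 e (layer n c r)).
Proof.
split=> [s|]; first exact: restrict01_out.
exists (map r (iota 0 n)) => s t s0 st t1 nB.
have [Is It] := in01_of s0 st t1; rewrite !restrict01_in //.
apply: (@layer_rel eq) => // i ilt.
have /(allP nB) : r i \in map r (iota 0 n) by apply: map_f; rewrite mem_iota add0n ilt.
by case: (leP (r i) s) => ris; case: (leP (r i) t) => rit //=; lra.
Qed.

Definition layer_step n (p : seqT G * seqT R) : H := exist _ _ (is_step_layer n p.1 p.2).

Lemma layer_stepE n p s : in01 s -> sval (layer_step n p) s = layer n p.1 p.2 s.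
Proof. exact: restrict01_in. Qed.

Lemma layer_step_continuous n : continuous (layer_step n).
Proof.
move=> [c r] A /nbhs_mballP [U [eps [nU ep sN]]].
have n1 : 0 < n%:R + 1 :> R by rewrite ltr_wpDl // ler0n.
pose w := eps / (n%:R + 1).
have w0 : 0 < w by rewrite divr_gt0.
have nwe : n%:R * w < eps.
  have : w * (n%:R + 1) = eps by rewrite divfK // gt_eqF.
  by rewrite mulrDr mulr1 mulrC; lra.
exists ([set c' : seqT G | forall i, (i < n)%N -> U (c i) (c' i)],
        [set r' : seqT R | forall i, (i < n)%N -> ball (r i) w (r' i)]).
  split; [apply: (nbhs_prod_coords (P := fun i => U (c i)))|
         apply: (nbhs_prod_coords (P := fun i => ball (r i) w))] => i.
  - exact: open_nbhs_nbhs (nU (c i)).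
  - exact: nbhsx_ballx.
move=> [c' r'] [/= cc' rr']; apply: sN; rewrite mballE.
pose D i := threshold_gap (r i) (r' i).
apply: le_lt_trans nwe; apply: le_trans (len_bigcup (D := D) _ _); last 2 first.
- by move=> i s [].
- move=> i ilt; have := rr' i ilt; rewrite /ball /= ltr_norml => /andP[h1 h2].
  by apply: len_threshold_gap; lra.
apply: len_le => [s [i _ []]//|s [Is nU']].
apply: contrapT => nD; apply: nU'; rewrite !layer_stepE //.
apply: (@layer_rel U) => //; first by case: (nU e).
move=> i ilt; rewrite !leNgt; congr negb; apply: contrapT => ne.
by apply: nD; exists i => //; split => //; apply/eqP.
Qed.

End Layers.
Arguments layer_step {G e} n p.

Lemma layer_step_onto (G : topologicalType) (e : G) (h : step_space G e) :
  exists (N : nat) (c : nat -> G) (r : nat -> R),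
  [/\ forall i, exists2 s, in01 s & c i = sval h s,
      forall i, `[0%R, 1%R]%classic (r i) &
      forall n, (N <= n)%N -> layer_step n (c, r) = h].
Proof.
have [B [Bsorted B0 /allP B01 HB]] := is_step_sorted_breaks (svalP h).
(* [r] lists the sorted breakpoints, padded with 1; [c] the values of [h] there *)
pose r i := nth 1 B i; exists (size B), (fun i => sval h (nth 0 B i)), r; split.
- move=> i; case: (ltnP i (size B)) => iB; last by exists 0; rewrite ?nth_default ?in01_0.
  by exists (nth 0 B i) => //; apply/B01/mem_nth.
- move=> i; rewrite /= in_itv /= /r; case: (ltnP i (size B)) => iB.
    by have /andP[-> /ltW ->] := B01 _ (mem_nth 1 iB).
  by rewrite nth_default // ler01 lexx.
move=> n Bn; apply: step_ext => s Is; rewrite layer_stepE //=.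
have [|j [jn rjs -> jlast]] := @layer_last _ e n (fun i => sval h (nth 0 B i)) r s.
  exists (index 0 B); first by apply: leq_trans Bn; rewrite index_mem.
  by rewrite /r nth_index //; case/andP: Is.
have jB : (j < size B)%N.
  rewrite ltnNge; apply/negP => Bj; move: rjs; rewrite /r nth_default //.
  by case/andP: Is => _; rewrite leNgt => ->.
rewrite (set_nth_default 1) //; have /andP[rj0 _] := B01 _ (mem_nth 1 jB).
apply: HB => //; first by case/andP: Is.
apply/allP => b bB; apply/negP => /andP[rjb bs]; have kB : (index b B < size B)%N by rewrite index_mem.
case: (leqP (index b B) j) => kj.
  have := @sorted_leq_nth _ _ le_trans lexx 1 B Bsorted (index b B) j.
  by rewrite !inE nth_index // => /(_ kB jB kj); rewrite leNgt rjb.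
by have := jlast _ (introT andP (conj kj (leq_trans kB Bn))); rewrite /r nth_index //; lra.
Qed.

Lemma step_sigma_compact (G : topologicalType) (e : G) :
  sigma_compact G -> sigma_compact (step_space G e).
Proof.
move=> [K [Kc Kcov]]; pose C n := \big[setU/set0]_(i < n.+1) K i.
have Cc n : compact (C n) by apply: bigsetU_compact => i _; exact: Kc.
have fin_C (l : seq G) : exists m, forall n, (m <= n)%N -> forall x, x \in l -> C n x.
  elim: l => [|x l [m lm]]; first by exists 0%N.
  have [k _ Kx] : (\bigcup_n K n) x by rewrite Kcov.
  exists (maxn m k) => n; rewrite geq_max => /andP[mn kn] y; rewrite inE.
  case/orP => [/eqP ->|]; last exact: lm.
  exact: (bigsetU_sup (F := K) (n := n.+1) kn Kx).
pose Dom n := [set c : prod_topology (fun _ : nat => G) | forall i, C n (c i)] `*`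
              [set r : prod_topology (fun _ : nat => R) | forall i, `[0%R, 1%R]%classic (r i)].
exists (fun n => layer_step n @` Dom n); split.
  move=> n; apply: continuous_compact.
    by apply: continuous_subspaceT; exact: layer_step_continuous.
  apply: compact_setX; first exact: (tychonoff (fun=> Cc n)).
  exact: (tychonoff (fun=> @segment_compact R 0 1)).
apply/seteqP; split => // h _.
have [N [c [r [c_vals r01 hlayer]]]] := layer_step_onto h.
have [l hl] := is_step_finite_range (svalP h); have [m lm] := fin_C l.
exists (maxn N m) => //; exists (c, r); last exact/hlayer/leq_maxl.
split => i /=; last exact: r01.
by have [s Is ->] := c_vals i; apply: lm; [exact: leq_maxr|exact: hl].
Qed.

Lemma gyro_lcan (T : Type) (op : T -> T -> T) (gyr : T -> T -> T -> T) (e : T) (inv : T -> T) :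
  left_id e op -> (forall x, op (inv x) x = e) -> (forall x y, injective (gyr x y)) ->
  (forall x y z, op x (op y z) = op (op x y) (gyr x y z)) -> forall a, injective (op a).
Proof.
move=> op0g opVg gyr_inj gyr_assoc a b c abc; apply: (@gyr_inj (inv a) a).
by have := congr1 (op (inv a)) abc; rewrite !gyr_assoc opVg !op0g.
Qed.

Lemma gyrogroup_laws (T : Type) (op : T -> T -> T) (gyr : T -> T -> T -> T) :
  gyrogroup op gyr ->
  [/\ forall x y, injective (gyr x y), forall x y w, exists z, gyr x y z = w,
      forall x y, {morph gyr x y : z w / op z w},
      forall x y z, op x (op y z) = op (op x y) (gyr x y z) &
      forall x y, gyr (op x y) y =1 gyr x y].
Proof.
move=> [_ [_ _ [_ _ aut assoc loop]]]; split=> [x y z w|x y w|x y z w|x y z|x y z].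
- by case: (aut x y I I) => _ + _ _; exact.
- by case: (aut x y I I) => _ _ /(_ w I)[z]; exists z.
- by case: (aut x y I I) => _ _ _; exact.
- exact: assoc.
- exact: loop.
Qed.

(* [x] and [y] are separated by the preimages, under [(a, b) |-> op (inv a) b],
   of a neighbourhood of [op (inv x) y] avoiding [e]. *)
Lemma gyrogroup_hausdorff (G : topologicalType) (op : G -> G -> G)
    (gyr : G -> G -> G -> G) (e : G) (inv : G -> G) :
  left_id e op -> (forall x, op (inv x) x = e) -> (forall x y, injective (gyr x y)) ->
  (forall x y z, op x (op y z) = op (op x y) (gyr x y z)) ->
  accessible_space G -> continuous (fun p : G * G => op p.1 p.2) -> continuous inv ->
  hausdorff_space G.
Proof.
move=> op0g opVg gyr_inj gyr_assoc T1 opC invC; rewrite open_hausdorff => x y xy.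
have ne : op (inv x) y != e.
  apply: contra xy => /eqP ixy; apply/eqP/(gyro_lcan op0g opVg gyr_inj gyr_assoc (a := inv x)).
  by rewrite ixy opVg.
have [W [oW Wxy We]] := T1 _ _ ne.
have /(opC (inv x, y))[[P Q] /= [Px Qy] PQ] : nbhs (op (inv x) y) W.
  by apply: open_nbhs_nbhs; split => //; rewrite -inE.
move: (invC x P Px) Qy; rewrite !nbhsE => -[A1 [oA1 A1x] A1P] [A2 [oA2 A2y] A2Q].
exists (A1, A2); first by rewrite !inE.
split => //; apply/eqP; apply/seteqP; split => // z [/A1P z1 /A2Q z2].
by move: We; rewrite inE /= -(opVg z) => /(_ (PQ (inv z, z) (conj z1 z2))).
Qed.

Section PointwiseGyrogroup.
Context (G : topologicalType) (op : G -> G -> G) (gyr : G -> G -> G -> G).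
Context (e : G) (inv : G -> G).
Hypothesis op0g : left_id e op.
Hypothesis opg0 : right_id e op.
Hypothesis opVg : forall x, op (inv x) x = e.
Hypothesis opgV : forall x, op x (inv x) = e.
Hypothesis gyr_inj : forall x y, injective (gyr x y).
Hypothesis gyr_surj : forall x y w, exists z, gyr x y z = w.
Hypothesis gyrM : forall x y, {morph gyr x y : z w / op z w}.
Hypothesis gyr_assoc : forall x y z, op x (op y z) = op (op x y) (gyr x y z).
Hypothesis gyr_loop : forall x y, gyr (op x y) y =1 gyr x y.
Local Notation H := (step_space G e).
Implicit Types f g h : H.

Definition gyr_pre x y w : G := sval (cid (gyr_surj x y w)).

Lemma gyr_preK x y w : gyr x y (gyr_pre x y w) = w.
Proof. by rewrite /gyr_pre; case: cid. Qed.

Definition step_op f g : H := lift3 (fun a b _ => op a b) f g f.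
Definition step_inv f : H := lift3 (fun a _ _ => inv a) f f f.
Definition step_gyr f g h : H := lift3 gyr f g h.
Definition step_gyr_pre f g h : H := lift3 gyr_pre f g h.

Lemma step_op0g : left_id (const_step e e) step_op.
Proof. by move=> f; apply: step_ext => s Is; rewrite lift3E // const_stepE // op0g. Qed.

Lemma step_opg0 : right_id (const_step e e) step_op.
Proof. by move=> f; apply: step_ext => s Is; rewrite lift3E // const_stepE // opg0. Qed.

Lemma step_opVg f : step_op (step_inv f) f = const_step e e.
Proof. by apply: step_ext => s Is; rewrite !lift3E ?const_stepE // opVg. Qed.

Lemma step_opgV f : step_op f (step_inv f) = const_step e e.
Proof. by apply: step_ext => s Is; rewrite !lift3E ?const_stepE // opgV. Qed.

Lemma step_gyrogroup_on (S : set H) : S (const_step e e) ->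
  (forall f g, S f -> S g -> S (step_op f g)) ->
  (forall f, S f -> S (step_inv f)) ->
  (forall f g h, S f -> S g -> S h -> S (step_gyr f g h)) ->
  (forall f g h, S f -> S g -> S h -> S (step_gyr_pre f g h)) ->
  gyrogroup_on step_op step_gyr S.
Proof.
move=> Se Sop Sinv Sgyr Spre; split => //; exists (const_step e e) => //; split.
- split=> [f _|e' Se' e'id]; first by rewrite step_op0g step_opg0.
  by rewrite -[e']step_opg0; case: (e'id _ Se).
- move=> f Sf; exists (step_inv f); first exact: Sinv.
  split=> [||f' _ _ ff']; [exact: step_opVg|exact: step_opgV|].
  apply: step_ext => s Is; rewrite lift3E //.
  apply: (gyro_lcan op0g opVg gyr_inj gyr_assoc (a := sval f s)); rewrite opgV.
  by have := congr1 (fun k : H => sval k s) ff'; rewrite lift3E ?const_stepE.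
- move=> f g Sf Sg; split.
  + by move=> h Sh; exact: Sgyr.
  + move=> h h' _ _ hh'; apply: step_ext => s Is; apply: (@gyr_inj (sval f s) (sval g s)).
    by have := congr1 (fun k : H => sval k s) hh'; rewrite !lift3E.
  + move=> h Sh; exists (step_gyr_pre f g h); first exact: Spre.
    by apply: step_ext => s Is; rewrite !lift3E // gyr_preK.
  + by move=> h h' _ _; apply: step_ext => s Is; rewrite !lift3E // gyrM.
- by move=> f g h _ _ _; apply: step_ext => s Is; rewrite !lift3E // gyr_assoc.
- by move=> f g h _ _ _; apply: step_ext => s Is; rewrite !lift3E // gyr_loop.
Qed.

Lemma step_gyrogroup : gyrogroup step_op step_gyr.
Proof. exact: step_gyrogroup_on. Qed.

Lemma const_step_morph : groupoid_hom op step_op (@const_step G e).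
Proof. by move=> x y; apply: step_ext => s Is; rewrite lift3E // !const_stepE. Qed.

Lemma const_step_subgyrogroup : subgyrogroup step_op step_gyr (range (@const_step G e)).
Proof.
split; first by exists (const_step e e), e.
apply: step_gyrogroup_on; first by exists e.
- by move=> _ _ [a _ <-] [b _ <-]; exists (op a b); rewrite ?const_step_morph.
- move=> _ [a _ <-]; exists (inv a) => //.
  by apply: step_ext => s Is; rewrite lift3E // !const_stepE.
- move=> _ _ _ [a _ <-] [b _ <-] [c _ <-]; exists (gyr a b c) => //.
  by apply: step_ext => s Is; rewrite lift3E // !const_stepE.
- move=> _ _ _ [a _ <-] [b _ <-] [c _ <-]; exists (gyr_pre a b c) => //.
  by apply: step_ext => s Is; rewrite lift3E // !const_stepE.
Qed.

Hypothesis T1 : accessible_space G.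
Hypothesis op_continuous : continuous (fun p : G * G => op p.1 p.2).
Hypothesis inv_continuous : continuous inv.

Lemma step_topological_gyrogroup : topological_gyrogroup step_op step_gyr.
Proof.
split; [exact: step_gyrogroup|exact: step_accessible|exact: lift_binary_continuous|].
exists (const_step e e), step_inv; split; last exact: lift_unary_continuous.
- by move=> f; rewrite step_op0g step_opg0.
- by move=> f; rewrite step_opVg step_opgV.
Qed.

End PointwiseGyrogroup.

Theorem mainTheorem12 (G : topologicalType) (opG : G -> G -> G)
    (gyrG : G -> G -> G -> G) :
  topological_gyrogroup opG gyrG -> sigma_compact G ->
  exists (H : topologicalType) (opH : H -> H -> H) (gyrH : H -> H -> H -> H)
         (phi : G -> H),
    [/\ topological_gyrogroup opH gyrH, sigma_compact H,
        path_connected_space H, locally_path_connected H &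
        [/\ groupoid_hom opG opH phi, embedding_onto_image phi,
            closed (range phi) & subgyrogroup opH gyrH (range phi)]].
Proof.
move=> [/gyrogroup_laws[gyr_inj gyr_surj gyrM gyr_assoc gyr_loop] T1 opC
        [e [inv [eid invK invC]]]] Gsc.
have op0g : left_id e opG by move=> a; case: (eid a).
have opg0 : right_id e opG by move=> a; case: (eid a).
have opVg x : opG (inv x) x = e by case: (invK x).
have opgV x : opG x (inv x) = e by case: (invK x).
have Ghaus : hausdorff_space G by exact: gyrogroup_hausdorff.
exists (step_space G e), (@step_op G opG e), (@step_gyr G gyrG e), (@const_step G e).
split.
- exact: step_topological_gyrogroup.
- exact: step_sigma_compact.
- exact: step_path_connected.
- exact: step_locally_path_connected.
- split; [exact: const_step_morph| |exact: const_step_closed|exact: const_step_subgyrogroup].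
  by split; [exact: const_step_inj|exact: const_step_continuous|exact: const_step_open].
Qed.
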